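(* Let $G$ be a group given by a presentation $\langle X\mid R\rangle$ in which every $x\in X$ satisfies $x^2=e$ and every relation in $R$ has even length. If $I=X$ or $I=\{x\}$ for some $x\in X$, then for every $w\in G$ the set $wG_I\cap G^I$ contains exactly one element. Consequently, the factorisation of each element of $G$ with respect to $G_I$ is unique: if $w=ab=a'b'$ with $a,a'\in G^I$ and $b,b'\in G_I$, then $a=a'$ and $b=b'$.
   Context: Every $w\in G$ can be written as a product $x_1^{a_1}\cdots x_r^{a_r}$ with $x_j\in X$, $a_j=\pm1$; the length $l(w)$ is the smallest such $r$. The length of a relation $u=v$ ($u,v$ in the free group $F(X)$) is the length of the word $uv^{-1}$ in $F(X)$. For $I\subseteq X$, $G_I$ is the subgroup of $G$ generated by $I$, and $G^I=\{w\in G: l(wy)>l(w)\ \text{for all } y\in I\}$. *)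

From Stdlib Require Import List Bool Arith.
Import ListNotations.
Set Implicit Arguments.
Unset Strict Implicit.

Record group := Group {
  carrier :> Type;
  gmul : carrier -> carrier -> carrier;
  gone : carrier;
  ginv : carrier -> carrier;
  gmulA : forall a b c, gmul a (gmul b c) = gmul (gmul a b) c;
  gmul1l : forall a, gmul gone a = a;
  gmul1r : forall a, gmul a gone = a;
  gmulVl : forall a, gmul (ginv a) a = gone;
  gmulVr : forall a, gmul a (ginv a) = gone }.

(* Words over the alphabet X^{±1}: a letter (x, false) is x, (x, true) is x^{-1}. *)
Definition word (X : Type) := list (X * bool).

Definition winv {X : Type} (w : word X) : word X :=
  rev (map (fun a => (fst a, negb (snd a))) w).

(* Congruence on words generated by free cancellation and the relations R
   (R u v means the relation u = v).  With R empty it is equality in F(X);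
   in general it is equality in <X | R>. *)
Inductive wequiv {X : Type} (R : word X -> word X -> Prop) : word X -> word X -> Prop :=
| weq_refl w : wequiv R w w
| weq_sym u v : wequiv R u v -> wequiv R v u
| weq_trans u v w : wequiv R u v -> wequiv R v w -> wequiv R u w
| weq_cancel u v x b : wequiv R (u ++ (x, b) :: (x, negb b) :: v) (u ++ v)
| weq_rel u v r1 r2 : R r1 r2 -> wequiv R (u ++ r1 ++ v) (u ++ r2 ++ v).

Definition no_rel {X : Type} : word X -> word X -> Prop := fun _ _ => False.

Definition free_length_is {X : Type} (w : word X) (n : nat) : Prop :=
  (exists w', wequiv no_rel w' w /\ length w' = n) /\
  (forall w', wequiv no_rel w' w -> n <= length w').

Definition relation_length_is {X : Type} (u v : word X) (n : nat) : Prop :=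
  free_length_is (u ++ winv v) n.

Section Eval.
Variables (G : group) (X : Type) (iota : X -> G).

Definition letter (a : X * bool) : G :=
  if snd a then @ginv G (iota (fst a)) else iota (fst a).

Definition eval (w : word X) : G :=
  fold_right (fun a acc => @gmul G (letter a) acc) (gone G) w.

Definition presents (R : word X -> word X -> Prop) : Prop :=
  (forall g : G, exists w, eval w = g) /\
  (forall u v, eval u = eval v <-> wequiv R u v).

Definition length_is (g : G) (n : nat) : Prop :=
  (exists w, eval w = g /\ length w = n) /\
  (forall w, eval w = g -> n <= length w).

Definition in_GI (I : X -> Prop) (g : G) : Prop :=
  exists w, Forall (fun a => I (fst a)) w /\ eval w = g.

Definition in_GupI (I : X -> Prop) (g : G) : Prop :=
  forall y, I y -> forall n m, length_is g n -> length_is (@gmul G g (iota y)) m -> n < m.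

End Eval.

(* Since every relation has even length and the generators are involutions,
   the parity of the length of a word depends only on the element of G it
   represents; hence l(g x) = l(g) +- 1 for every generator x.  For I = {x}
   we have G_I = {e, x}, and exactly one of w, w x lies in G^I.  For I = X the
   only element of G^I is e: a shortest word for a <> e ends with a letter of
   some x, and then l(a x) < l(a).  Uniqueness of the factorisation follows
   from uniqueness of the representative, G_I being closed under inverses. *)

From Stdlib Require Import List Arith Classical Lia.
Import ListNotations.

Set Implicit Arguments.
Unset Strict Implicit.

Lemma nat_least_exists (P : nat -> Prop) :
  (exists n, P n) -> exists n, P n /\ forall m, P m -> n <= m.
Proof.
  intros HP.
  destruct (Wf_nat.dec_inh_nat_subset_has_unique_least_element P
              (fun n => classic (P n)) HP) as [n [Hn _]].
  exists n; exact Hn.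
Qed.

Section GroupLaws.
Variable G : group.

Lemma gmul_cancel_l (a b c : G) : gmul a b = gmul a c -> b = c.
Proof.
  intros E.
  rewrite <- (gmul1l b), <- (gmul1l c), <- (gmulVl a), <- !gmulA, E.
  reflexivity.
Qed.

Lemma gmulK (a b : G) : gmul (gmul a b) (ginv b) = a.
Proof. rewrite <- gmulA, gmulVr, gmul1r. reflexivity. Qed.

Lemma ginvK (a : G) : ginv (ginv a) = a.
Proof.
  apply gmul_cancel_l with (a := ginv a).
  rewrite gmulVr, gmulVl. reflexivity.
Qed.

Lemma ginv1 : ginv (gone G) = gone G.
Proof. rewrite <- (gmul1l (ginv (gone G))), gmulVr. reflexivity. Qed.

Lemma ginvM (a b : G) : ginv (gmul a b) = gmul (ginv b) (ginv a).
Proof.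
  apply gmul_cancel_l with (a := gmul a b).
  rewrite gmulVr, gmulA, <- (gmulA a b), gmulVr, gmul1r, gmulVr.
  reflexivity.
Qed.

End GroupLaws.

Section FreeParity.
Variable X : Type.

Lemma wequiv_even_length (R : word X -> word X -> Prop) :
  (forall r1 r2, R r1 r2 -> Nat.even (length r1) = Nat.even (length r2)) ->
  forall u v, wequiv R u v -> Nat.even (length u) = Nat.even (length v).
Proof.
  intros HR u v H; induction H; simpl; try congruence.
  - rewrite !length_app, !Nat.even_add. reflexivity.
  - rewrite !length_app, !Nat.even_add, (HR _ _ H). reflexivity.
Qed.

Lemma length_winv (w : word X) : length (winv w) = length w.
Proof. unfold winv. rewrite length_rev, length_map. reflexivity. Qed.

Lemma free_length_exists (w : word X) : exists n, free_length_is w n.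
Proof.
  destruct (nat_least_exists (P := fun n => exists w', wequiv no_rel w' w /\ length w' = n))
    as [n [Hn Hmin]].
  { exists (length w), w. split; [constructor | reflexivity]. }
  exists n. split; [exact Hn |].
  intros w' Hw'. apply Hmin. exists w'. auto.
Qed.

Lemma free_length_is_even (w : word X) n :
  free_length_is w n -> Nat.even n = Nat.even (length w).
Proof.
  intros [[w' [Hw' <-]] _].
  apply (wequiv_even_length (R := no_rel)); [intros ? ? [] | exact Hw'].
Qed.

End FreeParity.

Section Presentation.
Variables (G : group) (X : Type) (iota : X -> G) (R : word X -> word X -> Prop).
Hypothesis hpres : presents iota R.
Hypothesis hinv : forall x : X, gmul (iota x) (iota x) = gone G.
Hypothesis heven :
  forall u v, R u v -> forall n, relation_length_is u v n -> Nat.even n = true.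

Lemma eval_app u v : eval iota (u ++ v) = gmul (eval iota u) (eval iota v).
Proof.
  induction u as [|a u IH]; simpl.
  - rewrite gmul1l. reflexivity.
  - rewrite IH, gmulA. reflexivity.
Qed.

Lemma eval_rcons w c : eval iota (w ++ [c]) = gmul (eval iota w) (letter iota c).
Proof. rewrite eval_app. simpl. rewrite gmul1r. reflexivity. Qed.

Lemma eval_winv w : eval iota (winv w) = ginv (eval iota w).
Proof.
  induction w as [|[x b] w IH]; simpl.
  - rewrite ginv1. reflexivity.
  - unfold winv in *. simpl. rewrite eval_rcons, IH, ginvM.
    unfold letter; simpl. destruct b; simpl; rewrite ?ginvK; reflexivity.
Qed.

Lemma ginv_gen x : ginv (iota x) = iota x.
Proof.
  rewrite <- (gmul1r (ginv (iota x))), <- (hinv x), gmulA, gmulVl, gmul1l.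
  reflexivity.
Qed.

Lemma letter_gen c : letter iota c = iota (fst c).
Proof. unfold letter. destruct (snd c); [apply ginv_gen | reflexivity]. Qed.

Lemma gmul_genK g x : gmul (gmul g (iota x)) (iota x) = g.
Proof. rewrite <- gmulA, hinv, gmul1r. reflexivity. Qed.

Lemma relation_even_length r1 r2 :
  R r1 r2 -> Nat.even (length r1) = Nat.even (length r2).
Proof.
  intros Hr.
  destruct (free_length_exists (r1 ++ winv r2)) as [n Hn].
  pose proof (heven Hr Hn) as Heven.
  rewrite (free_length_is_even Hn), length_app, length_winv, Nat.even_add in Heven.
  destruct (Nat.even (length r1)), (Nat.even (length r2)); easy.
Qed.

Lemma eval_even_length u v :
  eval iota u = eval iota v -> Nat.even (length u) = Nat.even (length v).
Proof.
  intros E. apply (wequiv_even_length relation_even_length).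
  apply (proj2 hpres). exact E.
Qed.

Lemma length_exists g : exists n, length_is iota g n.
Proof.
  destruct (nat_least_exists (P := fun n => exists w, eval iota w = g /\ length w = n))
    as [n [Hn Hmin]].
  { destruct (proj1 hpres g) as [w Hw]. eauto. }
  exists n. split; [exact Hn |].
  intros w Hw. apply Hmin. eauto.
Qed.

Lemma length_is_unique g n n' : length_is iota g n -> length_is iota g n' -> n = n'.
Proof.
  intros [[w [Hw Hl]] Hmin] [[w' [Hw' Hl']] Hmin'].
  specialize (Hmin w' Hw'). specialize (Hmin' w Hw). lia.
Qed.

Lemma length_is_one : length_is iota (gone G) 0.
Proof. split; [exists []; auto | intros; lia]. Qed.

Lemma length_is_mul_gen_le g x n m :
  length_is iota g n -> length_is iota (gmul g (iota x)) m -> m <= S n.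
Proof.
  intros [[w [Hw Hl]] _] [_ Hmin].
  specialize (Hmin (w ++ [(x, false)])).
  rewrite eval_rcons, length_app, Hw, Hl in Hmin. simpl in Hmin.
  rewrite Nat.add_1_r in Hmin. apply Hmin. reflexivity.
Qed.

Lemma length_is_mul_gen g x n m :
  length_is iota g n -> length_is iota (gmul g (iota x)) m -> m = S n \/ n = S m.
Proof.
  intros Hn Hm.
  pose proof (length_is_mul_gen_le Hn Hm).
  assert (n <= S m).
  { apply (length_is_mul_gen_le (x := x) Hm). rewrite gmul_genK. exact Hn. }
  assert (Hpar : Nat.even (S n) = Nat.even m).
  { destruct Hn as [[w [Hw Hl]] _], Hm as [[w' [Hw' Hl']] _].
    subst n m. replace (S (length w)) with (length (w ++ [(x, false)]))
      by (rewrite length_app; simpl; lia).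
    apply eval_even_length. rewrite eval_rcons, Hw, Hw'. reflexivity. }
  assert (n <> m) by (intros ->; rewrite Nat.even_succ, <- Nat.negb_even in Hpar;
                     destruct (Nat.even m); discriminate).
  lia.
Qed.

Lemma in_GI_one I : in_GI iota I (gone G).
Proof. exists []. split; auto. Qed.

Lemma in_GI_gen (I : X -> Prop) y : I y -> in_GI iota I (iota y).
Proof.
  intros Hy. exists [(y, false)]. split; [constructor; auto |].
  simpl. apply gmul1r.
Qed.

Lemma in_GI_inv I b : in_GI iota I b -> in_GI iota I (ginv b).
Proof.
  intros [w [Hw <-]]. exists (winv w). split; [| apply eval_winv].
  unfold winv. apply Forall_rev, Forall_map.
  eapply Forall_impl; [| exact Hw]. auto.
Qed.

Lemma in_GupI_one I : in_GupI iota I (gone G).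
Proof.
  intros y _ n m Hn Hm.
  rewrite <- (length_is_unique length_is_one Hn).
  destruct (length_is_mul_gen length_is_one Hm); lia.
Qed.

Definition min_coset_rep (I : X -> Prop) (w a : G) : Prop :=
  (exists b, in_GI iota I b /\ a = gmul w b) /\ in_GupI iota I a.

Lemma factorization_unique I :
  (forall w a a', min_coset_rep I w a -> min_coset_rep I w a' -> a = a') ->
  forall w a a' b b',
    in_GupI iota I a -> in_GupI iota I a' -> in_GI iota I b -> in_GI iota I b' ->
    w = gmul a b -> w = gmul a' b' -> a = a' /\ b = b'.
Proof.
  intros Huniq w a a' b b' Ha Ha' Hb Hb' Ew Ew'.
  assert (a = a') as <-.
  { apply (Huniq w); split; auto.
    - exists (ginv b). split; [apply in_GI_inv, Hb | rewrite Ew; symmetry; apply gmulK].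
    - exists (ginv b'). split; [apply in_GI_inv, Hb' | rewrite Ew'; symmetry; apply gmulK]. }
  split; [reflexivity |]. apply gmul_cancel_l with (a := a). congruence.
Qed.

Section AllGenerators.
Variable I : X -> Prop.
Hypothesis HI : forall x, I x.

Lemma in_GI_all g : in_GI iota I g.
Proof.
  destruct (proj1 hpres g) as [w Hw]. exists w. split; [| exact Hw].
  apply Forall_forall. auto.
Qed.

Lemma length_drop_exists a n :
  length_is iota a (S n) -> exists x m, length_is iota (gmul a (iota x)) m /\ m <= n.
Proof.
  intros [[w [Hw Hl]] _].
  destruct (exists_last (l := w)) as [w1 [c ->]]; [intros ->; discriminate |].
  rewrite length_app in Hl. simpl in Hl.
  exists (fst c).
  destruct (length_exists (gmul a (iota (fst c)))) as [m Hm].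
  exists m. split; [exact Hm |].
  destruct Hm as [_ Hmin]. rewrite <- Hw, eval_rcons, letter_gen, gmul_genK in Hmin.
  specialize (Hmin w1 eq_refl). lia.
Qed.

Lemma in_GupI_all_eq_one a : in_GupI iota I a -> a = gone G.
Proof.
  intros Ha. destruct (length_exists a) as [[|n] Hn].
  - destruct Hn as [[[|c w] [Hw Hl]] _]; [exact (eq_sym Hw) | discriminate].
  - destruct (length_drop_exists Hn) as [x [m [Hm Hle]]].
    specialize (Ha x (HI x) _ _ Hn Hm). lia.
Qed.

Lemma min_coset_rep_all w : min_coset_rep I w (gone G).
Proof.
  split; [| apply in_GupI_one].
  exists (ginv w). split; [apply in_GI_all | symmetry; apply gmulVr].
Qed.

End AllGenerators.

Section OneGenerator.
Variables (I : X -> Prop) (x0 : X).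
Hypothesis HI : forall x, I x <-> x = x0.

Lemma in_GI_singleton b : in_GI iota I b -> b = gone G \/ b = iota x0.
Proof.
  intros [w [Hw <-]].
  induction Hw as [|c w Hc _ IH]; simpl; [left; reflexivity |].
  rewrite letter_gen, (proj1 (HI _) Hc).
  destruct IH as [-> | ->]; [right; apply gmul1r | left; apply hinv].
Qed.

Lemma in_GupI_singleton_iff g n m :
  length_is iota g n -> length_is iota (gmul g (iota x0)) m ->
  (in_GupI iota I g <-> n < m).
Proof.
  intros Hn Hm. split.
  - intros Hg. apply (Hg x0); [apply HI; reflexivity | exact Hn | exact Hm].
  - intros Hlt y Hy n' m' Hn' Hm'. rewrite (proj1 (HI y) Hy) in Hm'.
    rewrite <- (length_is_unique Hn Hn'), <- (length_is_unique Hm Hm'). exact Hlt.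
Qed.

Lemma in_GupI_mul_gen_iff g :
  in_GupI iota I (gmul g (iota x0)) <-> ~ in_GupI iota I g.
Proof.
  destruct (length_exists g) as [n Hn].
  destruct (length_exists (gmul g (iota x0))) as [m Hm].
  assert (Hn' : length_is iota (gmul (gmul g (iota x0)) (iota x0)) n)
    by (rewrite gmul_genK; exact Hn).
  rewrite (in_GupI_singleton_iff Hm Hn'), (in_GupI_singleton_iff Hn Hm).
  destruct (length_is_mul_gen Hn Hm); lia.
Qed.

Lemma min_coset_rep_singleton_exists w : exists a, min_coset_rep I w a.
Proof.
  destruct (classic (in_GupI iota I w)) as [Hw | Hw].
  - exists w. split; [| exact Hw].
    exists (gone G). split; [apply in_GI_one | symmetry; apply gmul1r].
  - exists (gmul w (iota x0)). split; [| apply in_GupI_mul_gen_iff, Hw].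
    exists (iota x0). split; [apply in_GI_gen, HI | ]; reflexivity.
Qed.

Lemma min_coset_rep_singleton_unique w a a' :
  min_coset_rep I w a -> min_coset_rep I w a' -> a = a'.
Proof.
  intros [[b [Hb ->]] Ha] [[b' [Hb' ->]] Ha'].
  destruct (in_GI_singleton Hb) as [-> | ->], (in_GI_singleton Hb') as [-> | ->];
    try reflexivity; rewrite gmul1r in *; exfalso.
  - exact (proj1 (in_GupI_mul_gen_iff w) Ha' Ha).
  - exact (proj1 (in_GupI_mul_gen_iff w) Ha Ha').
Qed.

End OneGenerator.

End Presentation.

Theorem lemma3p10 (G : group) (X : Type) (iota : X -> G)
    (R : word X -> word X -> Prop)
    (hpres : presents iota R)
    (hinv : forall x : X, gmul (iota x) (iota x) = gone G)
    (heven : forall u v, R u v -> forall n, relation_length_is u v n -> Nat.even n = true)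
    (I : X -> Prop)
    (hI : (forall x, I x) \/ (exists x0, forall x, I x <-> x = x0)) :
  (forall w : G, exists a : G,
      ((exists b, in_GI iota I b /\ a = gmul w b) /\ in_GupI iota I a) /\
      (forall a' : G, (exists b, in_GI iota I b /\ a' = gmul w b) /\ in_GupI iota I a' -> a' = a)) /\
  (forall w a a' b b' : G,
      in_GupI iota I a -> in_GupI iota I a' -> in_GI iota I b -> in_GI iota I b' ->
      w = gmul a b -> w = gmul a' b' -> a = a' /\ b = b').
Proof.
  assert (Hexists : forall w, exists a, min_coset_rep iota I w a).
  { intros w. destruct hI as [HI | [x0 HI]].
    - exists (gone G). apply (min_coset_rep_all hpres hinv heven HI).
    - exact (min_coset_rep_singleton_exists hpres hinv heven HI w). }
  assert (Hunique : forall w a a', min_coset_rep iota I w a -> min_coset_rep iota I w a' -> a = a').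
  { intros w a a' Ha Ha'. destruct hI as [HI | [x0 HI]].
    - rewrite (in_GupI_all_eq_one hpres hinv HI (proj2 Ha)).
      symmetry. exact (in_GupI_all_eq_one hpres hinv HI (proj2 Ha')).
    - exact (min_coset_rep_singleton_unique hpres hinv heven HI Ha Ha'). }
  split.
  - intros w. destruct (Hexists w) as [a Ha].
    exists a. split; [exact Ha |]. intros a' Ha'. exact (Hunique w a' a Ha' Ha).
  - exact (factorization_unique Hunique).
Qed.
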